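(* Let $P,Q$ be coprime non-zero integers with $\Delta:=P^2-4Q>0$, let $(U_n)_{n\geq0}$ be the Lucas sequence $U(P,Q)$, and let $\alpha$ be the root of $X^2-PX+Q=0$ of largest absolute value. Then for every positive integer $n$, \[|\alpha|^{\frac{n^2}{4}-\frac{n}{2}-1}\leq \mathrm{lcm}(U_1,U_2,\dots,U_n)\leq |\alpha|^{\frac{n^2}{3}+\frac{7n}{3}-\frac{8}{3}}.\]
   Context: For non-zero integers $P,Q$, the Lucas sequence $U(P,Q)=(U_n)_{n\geq0}$ is defined by $U_0=0$, $U_1=1$, $U_{n+2}=PU_{n+1}-QU_n$ for $n\geq0$. When $\Delta=P^2-4Q>0$, the roots $\alpha,\beta$ of $X^2-PX+Q=0$ are real and labelled so that $|\alpha|>|\beta|$. $\mathrm{lcm}$ denotes the least common positive multiple (of the integers $U_1,\dots,U_n$, which are non-zero under these hypotheses). *)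

From Stdlib Require Import Reals ZArith.
Open Scope Z_scope.

(* Lucas sequence U(P,Q): U_0 = 0, U_1 = 1, U_{n+2} = P U_{n+1} - Q U_n. *)
Fixpoint lucas_pair (P Q : Z) (n : nat) : Z * Z :=
  match n with
  | O => (0, 1)
  | S m => let (a, b) := lucas_pair P Q m in (b, P * b - Q * a)
  end.

Definition lucasU (P Q : Z) (n : nat) : Z := fst (lucas_pair P Q n).

Fixpoint lcm_lucas (P Q : Z) (n : nat) : Z :=
  match n with
  | O => 1
  | S m => Z.lcm (lcm_lucas P Q m) (lucasU P Q (S m))
  end.

(* Bounds for lcm(U_1, ..., U_n) of a Lucas sequence U = U(P, Q) with gcd(P, Q) = 1 and
   Delta = P^2 - 4Q > 0.  Write s = |alpha| > t = |beta| = |P - alpha| and L_n = lcm(U_1, ..., U_n).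

   Integer side: the addition formula gives U_d | U_{kd} and, as gcd(P, Q) = 1, the strong
   divisibility gcd(U_a, U_b) | U_{gcd(a,b)}; moreover L_{k+1} gcd(L_k, U_{k+1}) = L_k |U_{k+1}|.
   Real side: Binet's formula together with s - t >= 1 and s t = |Q| >= 1 gives
   s^(k-1-c) <= |U_k| <= s^(k-c), where c = 0 if Q > 0 and c = 1 if Q < 0.

   Upper bound: for each k+1 we exhibit a common divisor D of L_k and U_{k+1} (1, U_m or
   lcm(U_{2m}, U_{3m}) according to (k+1) mod 6) with |U_{k+1}| <= R |D|; this gives
   L_{k+1}^6 <= L_k^6 s^tau(k+1), and summing, L_n^6 <= s^(2n^2 + 14n - 16).

   Lower bound: gcd(L_k, U_n) divides M_n = prod_{q in S, q | n} U_{n/q} for k < n, where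
   S = {2, 3} u {q >= 5 : q = +-1 mod 6}, because every y >= 2 has a divisor in S.  Hence
   L_n >= prod_k |U_k| / prod_k M_k, and the exponent of prod_k M_k is a sum over q in S of
   partial sums up to n/q, bounded by computation for n <= 80 and by a head (q <= 49) and
   tail (q > 49) estimate of sum_{q in S} 1/q^2 beyond. *)

From Stdlib Require Import Reals ZArith Znumtheory Lia Lra Psatz ZifyNat List.
Import ListNotations.

Open Scope Z_scope.

Lemma Zlcm_mul_gcd (a b : Z) : Z.lcm a b * Z.gcd a b = Z.abs (a * b).
Proof.
  destruct (Z.eq_dec (Z.gcd a b) 0) as [H|H].
  - apply Z.gcd_eq_0 in H as [-> ->]. reflexivity.
  - unfold Z.lcm. rewrite <- (Z.abs_eq (Z.gcd a b)) at 2 by apply Z.gcd_nonneg.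
    rewrite <- Z.abs_mul, <- Z.mul_assoc. f_equal. f_equal. rewrite Z.mul_comm.
    symmetry. apply Z.div_exact; [exact H|].
    apply Z.mod_divide; [exact H| apply Z.gcd_divide_r].
Qed.

Lemma Zdivide_mul_mul (a b c d : Z) : (a | b) -> (c | d) -> (a * c | b * d).
Proof. intros [x ->] [y ->]. exists (x * y). ring. Qed.

(* gcd(lcm(a,b), c) divides lcm(gcd(a,c), gcd(b,c)): a common divisor of L_{k+1} = lcm(L_k, U_{k+1})
   and U_n is controlled by its common divisors with L_k and with U_{k+1} separately. *)
Lemma Zgcd_lcm_divide (a b c : Z) :
  (Z.gcd (Z.lcm a b) c | Z.lcm (Z.gcd a c) (Z.gcd b c)).
Proof.
  set (u := Z.gcd a c). set (v := Z.gcd b c). set (g := Z.gcd (Z.lcm a b) c).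
  set (d := Z.gcd u v).
  assert (Hv0 : 0 <= v) by apply Z.gcd_nonneg.
  assert (Hda : (d | a)) by (apply (Z.divide_trans _ u); apply Z.gcd_divide_l).
  assert (Hdc : (d | c)) by (apply (Z.divide_trans _ u); [apply Z.gcd_divide_l| apply Z.gcd_divide_r]).
  assert (Hdb : (d | b)) by (apply (Z.divide_trans _ v); [apply Z.gcd_divide_r| apply Z.gcd_divide_l]).
  assert (Hgl : (g | Z.lcm a b)) by apply Z.gcd_divide_l.
  assert (Hgc : (g | c)) by apply Z.gcd_divide_r.
  destruct (Z.eq_dec d 0) as [Hd0|Hd0].
  { apply Z.gcd_eq_0 in Hd0 as [-> ->]. apply Z.divide_0_r. }
  (* It suffices that g * d divides lcm(u,v) * d = u * v = gcd(a v, c v). *)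
  apply (Z.mul_divide_cancel_r _ _ d Hd0).
  unfold d. rewrite Zlcm_mul_gcd, Z.abs_eq by (apply Z.mul_nonneg_nonneg; [apply Z.gcd_nonneg|lia]).
  assert (Hab : (g * d | a * b)).
  { apply Z.divide_abs_r. rewrite <- Zlcm_mul_gcd. apply Zdivide_mul_mul; [exact Hgl|].
    apply Z.gcd_greatest; assumption. }
  assert (Hxc : forall x, (d | x) -> (g * d | x * c)).
  { intros x Hx. rewrite (Z.mul_comm x c). apply Zdivide_mul_mul; assumption. }
  assert (Hyv : forall y, (g * d | y * b) -> (g * d | y * c) -> (g * d | y * v)).
  { intros y Hb Hc. apply Z.divide_abs_r. rewrite Z.abs_mul, (Z.abs_eq v) by lia.
    unfold v. rewrite <- Z.gcd_mul_mono_l. apply Z.gcd_greatest; assumption. }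
  unfold u. rewrite <- Z.gcd_mul_mono_r_nonneg by exact Hv0.
  apply Z.gcd_greatest; apply Hyv.
  - exact Hab.
  - apply Hxc, Hda.
  - rewrite (Z.mul_comm c b). apply Hxc, Hdb.
  - apply Hxc, Hdc.
Qed.

Section LucasDivisibility.
Variables P Q : Z.
Notation U := (lucasU P Q).

Lemma lucasU_0 : U 0 = 0.
Proof. reflexivity. Qed.

Lemma lucasU_1 : U 1 = 1.
Proof. reflexivity. Qed.

Lemma lucasU_rec n : U (S (S n)) = P * U (S n) - Q * U n.
Proof. unfold lucasU. simpl. destruct (lucas_pair P Q n). reflexivity. Qed.

Lemma lucasU_add b c : U (S b + c) = U (S b) * U (S c) - Q * U b * U c.
Proof.
  enough (H : U (S b + c) = U (S b) * U (S c) - Q * U b * U c /\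
              U (S b + S c) = U (S b) * U (S (S c)) - Q * U b * U (S c)) by apply H.
  induction c as [|c [IH1 IH2]].
  - rewrite Nat.add_0_r, lucasU_0, lucasU_1, Nat.add_1_r, !lucasU_rec, lucasU_1, lucasU_0.
    split; ring.
  - split; [exact IH2|].
    replace (S b + S (S c))%nat with (S (S (S b + c)))%nat by lia.
    rewrite lucasU_rec. replace (S (S b + c)) with (S b + S c)%nat by lia.
    rewrite IH1, IH2, (lucasU_rec (S c)), (lucasU_rec c). ring.
Qed.

Lemma lucasU_divide_mul d k : (U d | U (k * d)).
Proof.
  destruct d as [|d]; [rewrite Nat.mul_0_r; apply Z.divide_refl|].
  induction k as [|k IH]; [apply Z.divide_0_r|].
  replace (S k * S d)%nat with (S d + k * S d)%nat by lia.
  rewrite lucasU_add. apply Z.divide_sub_r.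
  - apply Z.divide_mul_l, Z.divide_refl.
  - apply Z.divide_mul_r, IH.
Qed.

Hypothesis hcop : Z.gcd P Q = 1.

Lemma lucasU_rel_prime_Q n : rel_prime (U (S n)) Q.
Proof.
  induction n as [|n IH].
  - rewrite lucasU_1. apply rel_prime_1.
  - apply Zis_gcd_intro; try apply Z.divide_1_l.
    intros x Hx HxQ. rewrite lucasU_rec in Hx.
    assert (HxP : (x | P * U (S n))).
    { replace (P * U (S n)) with ((P * U (S n) - Q * U n) + Q * U n) by ring.
      apply Z.divide_add_r; [exact Hx| apply Z.divide_mul_l, HxQ]. }
    apply Gauss in HxP.
    + apply IH; assumption.
    + apply (rel_prime_div Q P); [|exact HxQ].
      apply rel_prime_sym, Zgcd_1_rel_prime, hcop.
Qed.

Lemma lucasU_rel_prime_succ n : rel_prime (U n) (U (S n)).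
Proof.
  induction n as [|n IH].
  - rewrite lucasU_1. apply rel_prime_sym, rel_prime_1.
  - apply Zis_gcd_intro; try apply Z.divide_1_l.
    intros x H1 H2. rewrite lucasU_rec in H2.
    assert (HxQ : (x | Q * U n)).
    { replace (Q * U n) with (P * U (S n) - (P * U (S n) - Q * U n)) by ring.
      apply Z.divide_sub_r; [apply Z.divide_mul_r, H1| exact H2]. }
    apply Gauss in HxQ.
    + apply IH; assumption.
    + apply (rel_prime_div (U (S n))); [apply lucasU_rel_prime_Q| exact H1].
Qed.

Lemma lucasU_divide_reduce a c x : (x | U (S a)) -> (x | U (S a + c)) -> (x | U c).
Proof.
  intros Ha Hac. rewrite lucasU_add in Hac.
  assert (H : (x | Q * (U a * U c))).
  { replace (Q * (U a * U c)) with (U (S a) * U (S c) - (U (S a) * U (S c) - Q * U a * U c))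
      by ring.
    apply Z.divide_sub_r; [apply Z.divide_mul_l, Ha| exact Hac]. }
  apply Gauss in H; [| apply (rel_prime_div (U (S a))); [apply lucasU_rel_prime_Q| exact Ha]].
  apply Gauss in H; [exact H|].
  apply (rel_prime_div (U (S a))); [apply rel_prime_sym, lucasU_rel_prime_succ| exact Ha].
Qed.

Lemma lucasU_strong_divisibility a b x :
  (x | U a) -> (x | U b) -> (x | U (Nat.gcd a b)).
Proof.
  remember (a + b)%nat as m eqn:Hm. revert a b Hm.
  induction m as [m IH] using (well_founded_induction lt_wf).
  (* Reduce the larger index modulo the smaller one, as in Euclid's algorithm. *)
  assert (Hstep : forall a b, (a <= b)%nat -> (a + b = m)%nat ->
            (x | U a) -> (x | U b) -> (x | U (Nat.gcd a b))).
  { intros [|a] b Hab Hm Ha Hb; [exact Hb|].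
    destruct (Nat.le_exists_sub (S a) b Hab) as [c [-> _]].
    rewrite Nat.gcd_add_diag_r. rewrite Nat.add_comm in Hb.
    apply (IH (S a + c)%nat); [lia| reflexivity| exact Ha|].
    apply (lucasU_divide_reduce a); assumption. }
  intros a b Hm Ha Hb. destruct (Nat.le_ge_cases a b).
  - apply Hstep; [assumption| lia| assumption| assumption].
  - rewrite Nat.gcd_comm. apply Hstep; [assumption| lia| assumption| assumption].
Qed.

End LucasDivisibility.

Fixpoint nsum (f : nat -> nat) (m : nat) : nat :=
  match m with O => O | S m' => (nsum f m' + f (S m'))%nat end.

Fixpoint zprod (f : nat -> Z) (m : nat) : Z :=
  match m with O => 1 | S m' => zprod f m' * f (S m') end.

Lemma zprod_divide (f : nat -> Z) q m : (1 <= q <= m)%nat -> (f q | zprod f m).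
Proof.
  intros Hq. induction m as [|m IH]; [lia|]. cbn [zprod].
  destruct (Nat.eq_dec q (S m)) as [->|Hne].
  - apply Z.divide_mul_r, Z.divide_refl.
  - apply Z.divide_mul_l, IH. lia.
Qed.

Lemma zprod_nonzero (f : nat -> Z) m :
  (forall q, (1 <= q <= m)%nat -> f q <> 0) -> zprod f m <> 0.
Proof.
  induction m as [|m IH]; intros Hf; cbn [zprod]; [lia|].
  apply Z.neq_mul_0. split; [apply IH; intros; apply Hf; lia| apply Hf; lia].
Qed.

Definition sieve (q : nat) : bool :=
  (q =? 2)%nat || (q =? 3)%nat || ((5 <=? q)%nat && ((q mod 6 =? 1)%nat || (q mod 6 =? 5)%nat)).

(* Every y >= 2 has a divisor in S: 2, 3, or y itself when y is coprime to 6. *)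
Lemma sieve_divisor (y : nat) : (2 <= y)%nat ->
  exists q, sieve q = true /\ (y mod q = 0)%nat /\ (1 <= q <= y)%nat.
Proof.
  intros Hy.
  destruct (Nat.eq_dec (y mod 2) 0) as [H2|H2]; [exists 2%nat; split; [reflexivity| lia]|].
  destruct (Nat.eq_dec (y mod 3) 0) as [H3|H3]; [exists 3%nat; split; [reflexivity| lia]|].
  exists y. split; [| split; [apply Nat.Div0.mod_same| lia]].
  unfold sieve. rewrite !Bool.orb_true_iff, Bool.andb_true_iff, Bool.orb_true_iff,
    !Nat.eqb_eq, Nat.leb_le. lia.
Qed.

Section LucasLcm.
Variables P Q : Z.
Hypothesis hcop : Z.gcd P Q = 1.
Notation U := (lucasU P Q).
Notation L := (lcm_lucas P Q).

Lemma lcm_lucas_nonneg n : 0 <= L n.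
Proof. destruct n; simpl; [lia| apply Z.lcm_nonneg]. Qed.

Lemma lucasU_divide_lcm d j : (1 <= d <= j)%nat -> (U d | L j).
Proof.
  intros Hd. induction j as [|j IH]; [lia|]. cbn [lcm_lucas].
  destruct (Nat.eq_dec d (S j)) as [->|Hne].
  - apply Z.divide_lcm_r.
  - apply (Z.divide_trans _ (L j)); [apply IH; lia| apply Z.divide_lcm_l].
Qed.

Lemma lcm_lucas_pos n : (forall k, (1 <= k)%nat -> U k <> 0) -> 0 < L n.
Proof.
  intros HU. induction n as [|n IH]; [reflexivity|]. cbn [lcm_lucas].
  assert (Z.lcm (L n) (U (S n)) <> 0).
  { rewrite Z.lcm_eq_0. intros [H|H]; [lia| revert H; apply HU; lia]. }
  pose proof (Z.lcm_nonneg (L n) (U (S n))). lia.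
Qed.

Lemma lcm_lucas_step k : L (S k) * Z.gcd (L k) (U (S k)) = L k * Z.abs (U (S k)).
Proof.
  cbn [lcm_lucas]. rewrite Zlcm_mul_gcd, Z.abs_mul, (Z.abs_eq (L k)) by apply lcm_lucas_nonneg.
  reflexivity.
Qed.

Definition sieve_factor (n q : nat) : Z :=
  if (sieve q && (n mod q =? 0)%nat)%bool then U (n / q) else 1.
Definition sieve_product (n : nat) : Z := zprod (sieve_factor n) n.

(* gcd(U_j, U_n) divides M_n for 1 <= j < n: it divides U_d with d = gcd(j, n) a proper
   divisor of n, and n/d has a divisor q in S, so U_d | U_{n/q}. *)
Lemma gcd_lucasU_divide_sieve j n : (1 <= j < n)%nat -> (Z.gcd (U j) (U n) | sieve_product n).
Proof.
  intros Hj. set (d := Nat.gcd j n).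
  apply (Z.divide_trans _ (U d)).
  { apply lucasU_strong_divisibility; [exact hcop| apply Z.gcd_divide_l| apply Z.gcd_divide_r]. }
  destruct (Nat.gcd_divide_r j n) as [y Hy]. fold d in Hy.
  assert (Hd1 : (1 <= d)%nat).
  { destruct d eqn:Ed; [|lia]. apply Nat.gcd_eq_0_l in Ed. lia. }
  assert (Hdj : (d <= j)%nat) by (apply Nat.divide_pos_le; [lia| apply Nat.gcd_divide_l]).
  destruct (sieve_divisor y ltac:(nia)) as [q [Hq [Hqy Hqle]]].
  destruct (proj1 (Nat.Lcm0.mod_divide y q) Hqy) as [z Hz].
  assert (Hnq : (n / q = z * d)%nat).
  { rewrite Hy, Hz. replace (z * q * d)%nat with (z * d * q)%nat by ring.
    apply Nat.div_mul. lia. }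
  assert (Hnm : (n mod q = 0)%nat).
  { rewrite Hy, Hz. replace (z * q * d)%nat with (z * d * q)%nat by ring. apply Nat.Div0.mod_mul. }
  apply (Z.divide_trans _ (U (z * d))); [apply lucasU_divide_mul|].
  replace (U (z * d)) with (sieve_factor n q)
    by (unfold sieve_factor; rewrite Hq, Hnm, Hnq; reflexivity).
  apply zprod_divide. nia.
Qed.

Lemma gcd_lcm_lucas_divide_sieve i n : (i < n)%nat -> (Z.gcd (L i) (U n) | sieve_product n).
Proof.
  induction i as [|i IH]; intros Hi.
  - cbn [lcm_lucas]. rewrite Z.gcd_1_l. apply Z.divide_1_l.
  - cbn [lcm_lucas]. apply (Z.divide_trans _ _ _ (Zgcd_lcm_divide _ _ _)).
    apply Z.lcm_least; [apply IH; lia| apply gcd_lucasU_divide_sieve; lia].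
Qed.

End LucasLcm.

Open Scope R_scope.

Fixpoint geom (r : R) (k : nat) : R :=
  match k with O => 0 | S k' => 1 + r * geom r k' end.

Lemma geom_bounds_pos r k : 0 <= r < 1 -> (1 <= k)%nat -> 1 <= geom r k /\ geom r k * (1 - r) <= 1.
Proof.
  intros Hr Hk. induction k as [|[|k] IH]; [lia| simpl; lra|].
  destruct IH as [H1 H2]; [lia|]. change (geom r (S (S k))) with (1 + r * geom r (S k)). nra.
Qed.

Lemma geom_bounds_neg r k : -1 < r <= 0 -> (1 <= k)%nat -> 1 + r <= geom r k <= 1.
Proof.
  intros Hr Hk. induction k as [|[|k] IH]; [lia| simpl; lra|].
  destruct IH as [H1 H2]; [lia|]. change (geom r (S (S k))) with (1 + r * geom r (S k)). nra.
Qed.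

Section Binet.
Variables (P Q : Z) (alpha : R).
Hypothesis halpha : alpha * alpha - IZR P * alpha + IZR Q = 0.
Hypothesis hlargest : Rabs alpha > Rabs (IZR P - alpha).
Notation beta := (IZR P - alpha).
Notation U k := (IZR (lucasU P Q k)).

Lemma roots_product : alpha * beta = IZR Q.
Proof. nra. Qed.

Lemma roots_distinct : alpha - beta <> 0.
Proof. intros H. replace beta with alpha in hlargest by lra. lra. Qed.

Lemma binet k : U k = (alpha ^ k - beta ^ k) / (alpha - beta).
Proof.
  pose proof roots_distinct as Hne.
  enough (H : U k = (alpha ^ k - beta ^ k) / (alpha - beta) /\
              U (S k) = (alpha ^ S k - beta ^ S k) / (alpha - beta)) by apply H.
  induction k as [|k [IH1 IH2]].
  - rewrite lucasU_0, lucasU_1. split; simpl; field; exact Hne.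
  - split; [exact IH2|]. rewrite lucasU_rec, minus_IZR, !mult_IZR, IH1, IH2,
      <- roots_product. simpl. field. exact Hne.
Qed.

Lemma lucasU_succ_binet k : U (S k) = alpha ^ k + beta * U k.
Proof. rewrite !binet. simpl. field. apply roots_distinct. Qed.

Lemma lucasU_geom k : alpha <> 0 -> U k * alpha = alpha ^ k * geom (beta / alpha) k.
Proof.
  intros Ha. induction k as [|k IH]; [rewrite lucasU_0; simpl; ring|].
  rewrite lucasU_succ_binet. simpl.
  replace ((alpha ^ k + beta * U k) * alpha) with (alpha ^ k * alpha + beta * (U k * alpha))
    by ring.
  rewrite IH. field. exact Ha.
Qed.

Lemma lucasU_double m : U (m + m) = U m * (alpha ^ m + beta ^ m).
Proof. rewrite !binet, !pow_add. field. apply roots_distinct. Qed.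

Lemma lucasU_triple m :
  U (m + m + m) = U m * (alpha ^ m * alpha ^ m + alpha ^ m * beta ^ m + beta ^ m * beta ^ m).
Proof. rewrite !binet, !pow_add. field. apply roots_distinct. Qed.

Lemma lucasU_sextuple m :
  U (m + m + m + m + m + m) * U m =
  U (m + m) * U (m + m + m) * (alpha ^ m * alpha ^ m - alpha ^ m * beta ^ m + beta ^ m * beta ^ m).
Proof. rewrite !binet, !pow_add. field. apply roots_distinct. Qed.

End Binet.

Section Size.
Variables (P Q : Z) (alpha : R).
Hypothesis hP : P <> 0%Z.
Hypothesis hQ : Q <> 0%Z.
Hypothesis hDelta : (P * P - 4 * Q > 0)%Z.
Hypothesis halpha : alpha * alpha - IZR P * alpha + IZR Q = 0.
Hypothesis hlargest : Rabs alpha > Rabs (IZR P - alpha).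
Notation beta := (IZR P - alpha).
Notation s := (Rabs alpha).
Notation t := (Rabs (IZR P - alpha)).
Notation U k := (IZR (lucasU P Q k)).

Lemma IZR_abs_ge1 (z : Z) : z <> 0%Z -> 1 <= Rabs (IZR z).
Proof. intros H. rewrite <- abs_IZR. apply IZR_le. lia. Qed.

Lemma roots_abs_product : 1 <= s * t.
Proof. rewrite <- Rabs_mult, (roots_product P Q alpha halpha). apply IZR_abs_ge1, hQ. Qed.

(* |alpha| - |beta| is |alpha + beta| = |P| or |alpha - beta| = sqrt(Delta), hence >= 1. *)
Lemma roots_abs_gap : 1 <= s - t.
Proof.
  pose proof (Rabs_pos beta). pose proof (roots_product P Q alpha halpha) as Hprod.
  assert (Es : s * s = alpha * alpha) by (rewrite <- Rabs_mult; apply Rabs_pos_eq, Rle_0_sqr).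
  assert (Et : t * t = beta * beta) by (rewrite <- Rabs_mult; apply Rabs_pos_eq, Rle_0_sqr).
  enough (1 <= (s - t) * (s - t)) by nra.
  destruct (Rcase_abs (alpha * beta)) as [Hn|Hp].
  - assert (Hst : s * t = - (alpha * beta)) by (rewrite <- Rabs_mult; apply Rabs_left, Hn).
    replace ((s - t) * (s - t)) with (IZR P * IZR P) by nra.
    rewrite <- mult_IZR. apply IZR_le. nia.
  - assert (Hst : s * t = alpha * beta) by (rewrite <- Rabs_mult; apply Rabs_right, Hp).
    replace ((s - t) * (s - t)) with (IZR (P * P - 4 * Q)) by
      (rewrite minus_IZR, !mult_IZR, <- Hprod; nra).
    apply IZR_le. lia.
Qed.

Lemma root_golden : s + 1 <= s * s.
Proof. pose proof roots_abs_gap. pose proof roots_abs_product. pose proof (Rabs_pos beta). nra. Qed.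

Lemma root_gt1 : 1 < s.
Proof. pose proof root_golden. pose proof (Rabs_pos alpha). nra. Qed.

Lemma root_pow_pos k : 0 < s ^ k.
Proof. apply pow_lt. pose proof root_gt1. lra. Qed.

(* Indeed U_k alpha = alpha^k G_k(rho), rho = beta/alpha, |rho| = t/s < 1 has the sign of Q,
   and 1 - |rho| = (s - t)/s >= 1/s. *)
Lemma lucasU_size : exists c, (c <= 1)%nat /\
  forall k, (1 <= k)%nat -> s ^ (k - 1 - c) <= Rabs (U k) <= s ^ (k - c).
Proof.
  pose proof root_gt1 as Hs. pose proof roots_abs_gap as Hgap.
  assert (Ha : alpha <> 0) by (intros H; rewrite H, Rabs_R0 in Hs; lra).
  set (rho := beta / alpha).
  assert (Hrho : Rabs rho * s = t) by (unfold rho; rewrite <- Rabs_mult; f_equal; field; exact Ha).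
  assert (Hsign : IZR Q = rho * (alpha * alpha))
    by (rewrite <- (roots_product P Q alpha halpha); unfold rho; field; exact Ha).
  assert (Haa : 0 < alpha * alpha) by nra.
  assert (HUG : forall k, Rabs (U k) * s = s ^ k * Rabs (geom rho k)).
  { intros k. rewrite <- Rabs_mult, (lucasU_geom P Q alpha halpha hlargest k Ha), Rabs_mult,
      RPow_abs. reflexivity. }
  assert (Hpow : forall j, s ^ S j = s ^ j * s) by (intros j; simpl; ring).
  (* |U_{k+1}| = s^k G_{k+1}: it remains to bound G_{k+1} between s^(-c) and s^(1-c). *)
  assert (Hscale : forall k a b, a <= geom rho (S k) <= b -> 0 <= a ->
            s ^ k * a <= Rabs (U (S k)) <= s ^ k * b).
  { intros k a b [Ha1 Hb1] Ha0. pose proof (root_pow_pos k).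
    specialize (HUG (S k)). rewrite (Rabs_right (geom rho (S k))) in HUG by lra.
    rewrite Hpow in HUG. assert (0 < s ^ k * s) by (apply Rmult_lt_0_compat; lra).
    split; apply (Rmult_le_reg_r s); try lra; rewrite HUG.
    - replace (s ^ k * a * s) with (s ^ k * s * a) by ring. apply Rmult_le_compat_l; lra.
    - replace (s ^ k * b * s) with (s ^ k * s * b) by ring. apply Rmult_le_compat_l; lra. }
  destruct (proj1 (Z.lt_gt_cases Q 0) hQ) as [HQn|HQp].
  - (* Q < 0: -1 < rho < 0, so 1/s <= 1 + rho <= G_k <= 1. *)
    assert (Hr : rho < 0) by (apply IZR_lt in HQn; nra).
    rewrite Rabs_left in Hrho by exact Hr.
    exists 1%nat. split; [lia|]. intros [|k] Hk; [lia|].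
    destruct (geom_bounds_neg rho (S k) ltac:(split; [apply (Rmult_lt_reg_r s)|]; lra) Hk) as [G1 G2].
    destruct k as [|k]; [rewrite lucasU_1, Rabs_R1; simpl; lra|].
    replace (S (S k) - 1 - 1)%nat with k by lia. replace (S (S k) - 1)%nat with (S k) by lia.
    destruct (Hscale (S k) (/ s) 1) as [H1 H2]; [split|..].
    + apply (Rmult_le_reg_r s); [lra|]. rewrite Rinv_l by lra. nra.
    + exact G2.
    + apply Rlt_le, Rinv_0_lt_compat. lra.
    + rewrite Hpow, Rmult_assoc, Rinv_r in H1 by lra. lra.
  - (* Q > 0: 0 < rho < 1, so 1 <= G_k <= 1/(1 - rho) = s/(s - t) <= s. *)
    assert (Hr : 0 < rho) by (apply IZR_lt in HQp; nra).
    rewrite Rabs_right in Hrho by lra.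
    exists 0%nat. split; [lia|]. intros [|k] Hk; [lia|].
    destruct (geom_bounds_pos rho (S k) ltac:(split; [|apply (Rmult_lt_reg_r s)]; lra) Hk)
      as [G1 G2].
    replace (S k - 1 - 0)%nat with k by lia. replace (S k - 0)%nat with (S k) by lia.
    rewrite Hpow. destruct (Hscale k 1 s) as [H1 H2]; [split; [exact G1| nra]| lra|].
    lra.
Qed.

Lemma lucasU_nonzero k : (1 <= k)%nat -> lucasU P Q k <> 0%Z.
Proof.
  intros Hk H. destruct lucasU_size as [c [_ Hc]]. destruct (Hc k Hk) as [H1 _].
  rewrite H, Rabs_R0 in H1. pose proof (root_pow_pos (k - 1 - c)). lra.
Qed.

Lemma lucasU_abs_le k : Rabs (U k) <= s ^ k.
Proof.
  destruct k as [|k]; [rewrite lucasU_0, Rabs_R0; simpl; lra|].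
  destruct lucasU_size as [c [_ Hc]]. destruct (Hc (S k) ltac:(lia)) as [_ H].
  apply (Rle_trans _ _ _ H), Rle_pow; [pose proof root_gt1; lra| lia].
Qed.

End Size.
Lemma Rpower_upper_of_pow (x s e : R) (k N : nat) : 0 < x -> 1 < s -> (0 < k)%nat ->
  x ^ k <= s ^ N -> INR N <= INR k * e -> x <= Rpower s e.
Proof.
  intros Hx Hs Hk HxN He.
  assert (HkR : 0 < INR k) by (apply lt_0_INR, Hk).
  replace x with (Rpower (x ^ k) (/ INR k))
    by (rewrite <- Rpower_pow, Rpower_mult, Rinv_r, Rpower_1 by lra; reflexivity).
  apply (Rle_trans _ (Rpower (s ^ N) (/ INR k))).
  - apply Rle_Rpower_l; [apply Rlt_le, Rinv_0_lt_compat, HkR| split; [apply pow_lt, Hx| exact HxN]].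
  - rewrite <- Rpower_pow, Rpower_mult by lra. apply Rle_Rpower; [lra|].
    apply (Rmult_le_reg_l (INR k)); [exact HkR|].
    replace (INR k * (INR N * / INR k)) with (INR N) by (field; lra). exact He.
Qed.

Lemma Rpower_lower_of_pow (x s e : R) (A B : nat) : 1 < s ->
  s ^ B <= x * s ^ A -> e <= INR B - INR A -> Rpower s e <= x.
Proof.
  intros Hs HBA He. pose proof (pow_lt s A ltac:(lra)).
  apply (Rle_trans _ (Rpower s (INR B - INR A))); [apply Rle_Rpower; lra|].
  unfold Rminus. rewrite Rpower_plus, Rpower_Ropp, !Rpower_pow by lra.
  apply (Rmult_le_reg_r (s ^ A)); [lra|]. rewrite Rmult_assoc, Rinv_l by lra. lra.
Qed.

Section TauSum.
Local Open Scope nat_scope.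

(* Exponent of the step L_{k-1} -> L_k of the upper bound: L_k^6 <= L_{k-1}^6 s^(tau k). *)
Definition tau (k : nat) : nat :=
  if k =? 1 then 0 else
  match k mod 6 with
  | 1 | 5 => 6 * k
  | 2 | 4 => 3 * k + 9
  | 3 => 4 * k + 14
  | _ => 2 * k + 14
  end.

Definition tau_defect (n : nat) : nat :=
  match n mod 6 with
  | 1 => 20 * (n / 6)
  | 2 => 26 * (n / 6) + 5
  | 3 => 26 * (n / 6) + 3
  | 4 => 32 * (n / 6) + 10
  | 5 => 20 * (n / 6) + 12
  | _ => 32 * (n / 6) - 10
  end.

Lemma tau_sum_exact n : 1 <= n -> nsum tau n + 16 + tau_defect n = 2 * n * n + 14 * n.
Proof.
  induction n as [|n IH]; intros Hn; [lia|].
  destruct (Nat.eq_dec n 0) as [->|Hn0]; [reflexivity|].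
  specialize (IH ltac:(lia)). cbn [nsum]. unfold tau, tau_defect in *.
  destruct (Nat.eqb_spec (S n) 1); [lia|].
  assert (Hc : n mod 6 = 0 \/ n mod 6 = 1 \/ n mod 6 = 2 \/ n mod 6 = 3 \/ n mod 6 = 4 \/
               n mod 6 = 5) by (clear IH; lia).
  destruct Hc as [H|[H|[H|[H|[H|H]]]]];
  [ replace (S n mod 6) with 1 by lia
  | replace (S n mod 6) with 2 by lia
  | replace (S n mod 6) with 3 by lia
  | replace (S n mod 6) with 4 by lia
  | replace (S n mod 6) with 5 by lia
  | replace (S n mod 6) with 0 by lia ];
  rewrite H in IH; nia.
Qed.

End TauSum.

Section UpperBound.
Variables (P Q : Z) (alpha : R).
Hypothesis hP : P <> 0%Z.
Hypothesis hQ : Q <> 0%Z.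
Hypothesis hcop : Z.gcd P Q = 1%Z.
Hypothesis hDelta : (P * P - 4 * Q > 0)%Z.
Hypothesis halpha : alpha * alpha - IZR P * alpha + IZR Q = 0.
Hypothesis hlargest : Rabs alpha > Rabs (IZR P - alpha).
Notation beta := (IZR P - alpha).
Notation s := (Rabs alpha).
Notation U := (lucasU P Q).
Notation L := (lcm_lucas P Q).

Let Unz := lucasU_nonzero P Q alpha hP hQ hDelta halpha hlargest.
Let Lpos n : 0 < IZR (L n) := IZR_lt _ _ (lcm_lucas_pos P Q n Unz).

(* If D divides both L_k and U_{k+1} and |U_{k+1}| <= R |D| with R^6 <= s^e, then
   L_{k+1}^6 <= L_k^6 s^e, since L_{k+1} = L_k |U_{k+1}| / gcd(L_k, U_{k+1}). *)
Lemma lcm_step_upper k (D : Z) (R : R) (e : nat) :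
  (D | L k)%Z -> (D | U (S k))%Z -> D <> 0%Z -> 0 <= R ->
  Rabs (IZR (U (S k))) <= R * Rabs (IZR D) -> R ^ 6 <= s ^ e ->
  IZR (L (S k)) ^ 6 <= IZR (L k) ^ 6 * s ^ e.
Proof.
  intros HDL HDU HD HR HUR He.
  set (g := Z.gcd (L k) (U (S k))).
  assert (Hg : (D | g)%Z) by (apply Z.gcd_greatest; assumption).
  assert (Hgpos : (0 < g)%Z).
  { pose proof (lcm_lucas_pos P Q k Unz). pose proof (Z.gcd_nonneg (L k) (U (S k))).
    assert (g <> 0%Z) by (intros Hg0; apply Z.gcd_eq_0 in Hg0; lia). lia. }
  assert (HDg : Rabs (IZR D) <= IZR g).
  { rewrite <- abs_IZR. apply IZR_le, Z.divide_pos_le; [exact Hgpos| apply Z.divide_abs_l, Hg]. }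
  assert (Hstep : IZR (L (S k)) * IZR g = IZR (L k) * Rabs (IZR (U (S k)))).
  { rewrite <- abs_IZR, <- !mult_IZR. f_equal. apply lcm_lucas_step. }
  assert (HD0 : 0 < Rabs (IZR D)) by (apply Rabs_pos_lt, not_0_IZR, HD).
  pose proof (Lpos k). pose proof (Lpos (S k)).
  assert (Hle : IZR (L (S k)) <= IZR (L k) * R) by nra.
  apply (Rle_trans _ ((IZR (L k) * R) ^ 6)).
  - apply pow_incr. lra.
  - rewrite Rpow_mult_distr. apply Rmult_le_compat_l; [apply pow_le; lra| exact He].
Qed.

(* Size of the cofactors in U_{2m} / U_m, U_{3m} / U_m and U_{6m} U_m / (U_{2m} U_{3m}). *)
Lemma roots_pow_sum_le m : Rabs (alpha ^ m + beta ^ m) <= 2 * s ^ m.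
Proof.
  pose proof (pow_incr _ _ m (conj (Rabs_pos beta) (Rlt_le _ _ hlargest))).
  apply (Rle_trans _ _ _ (Rabs_triang _ _)). rewrite <- !RPow_abs. lra.
Qed.

Lemma roots_pow_trinomial_le m (e : R) : Rabs e = 1 ->
  Rabs (alpha ^ m * alpha ^ m + e * (alpha ^ m * beta ^ m) + beta ^ m * beta ^ m) <= 3 * s ^ (m + m).
Proof.
  intros He. pose proof (pow_incr _ _ m (conj (Rabs_pos beta) (Rlt_le _ _ hlargest))).
  pose proof (pow_le _ m (Rabs_pos beta)).
  apply (Rle_trans _ _ _ (Rabs_triang _ _)).
  apply (Rle_trans _ _ _ (Rplus_le_compat_r _ _ _ (Rabs_triang _ _))).
  rewrite pow_add, !Rabs_mult, <- !RPow_abs, He. nra.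
Qed.

(* Numerical consequences of s^2 >= s + 1, needed to absorb the constants 2^6 and 3^6. *)
Lemma root_pow9 : 64 <= s ^ 9.
Proof.
  pose proof (root_golden P Q alpha hP hQ hDelta halpha hlargest).
  pose proof (root_gt1 P Q alpha hP hQ hDelta halpha hlargest).
  assert (H3 : 4 <= s ^ 3) by (simpl; nra).
  assert (H6 : 16 <= s ^ 3 * s ^ 3) by nra.
  replace (s ^ 9) with (s ^ 3 * s ^ 3 * s ^ 3) by ring. nra.
Qed.

Lemma root_pow14 : 729 <= s ^ 14.
Proof.
  pose proof (root_golden P Q alpha hP hQ hDelta halpha hlargest).
  pose proof (root_gt1 P Q alpha hP hQ hDelta halpha hlargest).
  assert (H4 : 3 * s + 2 <= s ^ 4) by (simpl; nra).
  assert (H3 : 2 * s + 1 <= s ^ 3) by (simpl; nra).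
  assert (H7 : 27 <= s ^ 7) by (replace (s ^ 7) with (s ^ 4 * s ^ 3) by ring; nra).
  replace (s ^ 14) with (s ^ 7 * s ^ 7) by ring. nra.
Qed.

Lemma lcm_step_generic k : IZR (L (S k)) ^ 6 <= IZR (L k) ^ 6 * s ^ (6 * S k).
Proof.
  apply (lcm_step_upper k 1 (s ^ S k)); try (apply Z.divide_1_l || lia).
  - apply pow_le, Rabs_pos.
  - rewrite Rabs_R1, Rmult_1_r. apply (lucasU_abs_le P Q alpha hP hQ hDelta halpha hlargest).
  - rewrite <- pow_mult, Nat.mul_comm. lra.
Qed.

(* With D = U_m when k + 1 = 2m: U_{2m} = U_m (alpha^m + beta^m). *)
Lemma lcm_step_double k m : S k = (m + m)%nat ->
  IZR (L (S k)) ^ 6 <= IZR (L k) ^ 6 * s ^ (9 + 6 * m).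
Proof.
  intros Hk. pose proof (root_pow_pos P Q alpha hP hQ hDelta halpha hlargest m).
  apply (lcm_step_upper k (U m) (2 * s ^ m)).
  - apply lucasU_divide_lcm. lia.
  - rewrite Hk. replace (m + m)%nat with (2 * m)%nat by lia. apply lucasU_divide_mul.
  - apply Unz. lia.
  - lra.
  - rewrite Hk, (lucasU_double P Q alpha halpha hlargest), Rabs_mult, Rmult_comm.
    apply Rmult_le_compat_r; [apply Rabs_pos| apply roots_pow_sum_le].
  - rewrite (pow_add s 9), Nat.mul_comm, pow_mult, Rpow_mult_distr. pose proof root_pow9.
    apply Rmult_le_compat_r; [apply pow_le|]; lra.
Qed.

(* With D = U_m when k + 1 = 3m: U_{3m} = U_m (alpha^2m + alpha^m beta^m + beta^2m). *)
Lemma lcm_step_triple k m : S k = (m + m + m)%nat ->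
  IZR (L (S k)) ^ 6 <= IZR (L k) ^ 6 * s ^ (14 + 6 * (m + m)).
Proof.
  intros Hk. pose proof (root_pow_pos P Q alpha hP hQ hDelta halpha hlargest (m + m)).
  apply (lcm_step_upper k (U m) (3 * s ^ (m + m))).
  - apply lucasU_divide_lcm. lia.
  - rewrite Hk. replace (m + m + m)%nat with (3 * m)%nat by lia. apply lucasU_divide_mul.
  - apply Unz. lia.
  - lra.
  - rewrite Hk, (lucasU_triple P Q alpha halpha hlargest), Rabs_mult, Rmult_comm.
    apply Rmult_le_compat_r; [apply Rabs_pos|].
    rewrite <- (Rmult_1_l (alpha ^ m * beta ^ m)).
    apply roots_pow_trinomial_le, Rabs_R1.
  - rewrite (pow_add s 14), Nat.mul_comm, pow_mult, Rpow_mult_distr. pose proof root_pow14.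
    apply Rmult_le_compat_r; [apply pow_le|]; lra.
Qed.

(* With D = lcm(U_2m, U_3m) when k + 1 = 6m: U_6m U_m = U_2m U_3m (alpha^2m - alpha^m beta^m + beta^2m)
   and gcd(U_2m, U_3m) divides U_m by strong divisibility. *)
Lemma lcm_step_sextuple k m : S k = (m + m + m + m + m + m)%nat ->
  IZR (L (S k)) ^ 6 <= IZR (L k) ^ 6 * s ^ (14 + 6 * (m + m)).
Proof.
  intros Hk. pose proof (root_pow_pos P Q alpha hP hQ hDelta halpha hlargest (m + m)).
  set (D := Z.lcm (U (m + m)) (U (m + m + m))).
  set (g := Z.gcd (U (m + m)) (U (m + m + m))).
  assert (HUm : (U m <> 0)%Z) by (apply Unz; lia).
  assert (Hg : (g | U m)%Z).
  { assert (Hgcd : Nat.gcd (m + m) (m + m + m) = m).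
    { replace (m + m + m)%nat with (m + (m + m))%nat by lia.
      rewrite Nat.gcd_add_diag_r, Nat.gcd_comm, Nat.gcd_add_diag_r. apply Nat.gcd_diag. }
    rewrite <- Hgcd.
    apply lucasU_strong_divisibility; [exact hcop| apply Z.gcd_divide_l| apply Z.gcd_divide_r]. }
  assert (Hgpos : (0 < g)%Z).
  { pose proof (Z.gcd_nonneg (U (m + m)) (U (m + m + m))).
    assert (g <> 0%Z) by (intros Hg0; apply Z.gcd_eq_0 in Hg0 as [Hg0 _]; revert Hg0; apply Unz; lia).
    lia. }
  assert (Hgle : IZR g <= Rabs (IZR (U m))).
  { rewrite <- abs_IZR. apply IZR_le, Z.divide_pos_le; [lia| apply Z.divide_abs_r, Hg]. }
  assert (HDg : Rabs (IZR D) * IZR g = Rabs (IZR (U (m + m))) * Rabs (IZR (U (m + m + m)))).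
  { rewrite <- !abs_IZR, <- !mult_IZR, <- Z.abs_mul, <- (Zlcm_mul_gcd (U (m + m))).
    fold D g. rewrite (Z.abs_eq D) by apply Z.lcm_nonneg. reflexivity. }
  apply (lcm_step_upper k D (3 * s ^ (m + m))).
  - apply Z.lcm_least; apply lucasU_divide_lcm; lia.
  - rewrite Hk. apply Z.lcm_least.
    + replace (m + m + m + m + m + m)%nat with (3 * (m + m))%nat by lia. apply lucasU_divide_mul.
    + replace (m + m + m + m + m + m)%nat with (2 * (m + m + m))%nat by lia. apply lucasU_divide_mul.
  - unfold D. rewrite Z.lcm_eq_0. intros [HD0|HD0]; revert HD0; apply Unz; lia.
  - lra.
  - (* |U_6m| |U_m| = |D| g |trinomial| <= |D| |U_m| 3 s^2m. *)
    assert (Hum : 0 < Rabs (IZR (U m))) by (apply Rabs_pos_lt, not_0_IZR, HUm).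
    apply (Rmult_le_reg_r (Rabs (IZR (U m)))); [exact Hum|].
    rewrite Hk, <- Rabs_mult, (lucasU_sextuple P Q alpha halpha hlargest), !Rabs_mult, <- HDg.
    pose proof (roots_pow_trinomial_le m (-1) ltac:(rewrite Rabs_left; lra)) as Htri.
    replace (alpha ^ m * alpha ^ m + -1 * (alpha ^ m * beta ^ m) + beta ^ m * beta ^ m)
      with (alpha ^ m * alpha ^ m - alpha ^ m * beta ^ m + beta ^ m * beta ^ m) in Htri by ring.
    pose proof (Rabs_pos (IZR D)). pose proof (Rabs_pos (IZR (U m))).
    pose proof (Rabs_pos (alpha ^ m * alpha ^ m - alpha ^ m * beta ^ m + beta ^ m * beta ^ m)).
    apply (Rle_trans _ (Rabs (IZR D) * IZR g * (3 * s ^ (m + m)))).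
    + apply Rmult_le_compat_l; [apply Rmult_le_pos; [lra| apply IZR_le; lia]| exact Htri].
    + replace (3 * s ^ (m + m) * Rabs (IZR D) * Rabs (IZR (U m)))
        with (Rabs (IZR D) * Rabs (IZR (U m)) * (3 * s ^ (m + m))) by ring.
      apply Rmult_le_compat_r; [lra| apply Rmult_le_compat_l; lra].
  - rewrite (pow_add s 14), Nat.mul_comm, pow_mult, Rpow_mult_distr. pose proof root_pow14.
    apply Rmult_le_compat_r; [apply pow_le|]; lra.
Qed.

(* The divisor is chosen according to (k+1) mod 6; tau (k+1) is exactly the resulting exponent. *)
Lemma lcm_step_tau k : IZR (L (S k)) ^ 6 <= IZR (L k) ^ 6 * s ^ tau (S k).
Proof.
  destruct (Nat.eq_dec k 0) as [->|Hk0]; [cbn [lcm_lucas]; rewrite lucasU_1, Z.lcm_1_l; simpl; lra|].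
  unfold tau. destruct (Nat.eqb_spec (S k) 1) as [|_]; [lia|].
  pose proof (Nat.div_mod_eq (S k) 6) as Hdiv. pose proof (Nat.mod_upper_bound (S k) 6) as Hlt.
  set (q := (S k / 6)%nat) in Hdiv.
  destruct (S k mod 6)%nat as [|[|[|[|[|[|r]]]]]] eqn:Hr.
  - replace (2 * S k + 14)%nat with (14 + 6 * (q + q))%nat by lia.
    apply lcm_step_sextuple. lia.
  - apply lcm_step_generic.
  - replace (3 * S k + 9)%nat with (9 + 6 * (3 * q + 1))%nat by lia.
    apply lcm_step_double. lia.
  - replace (4 * S k + 14)%nat with (14 + 6 * ((2 * q + 1) + (2 * q + 1)))%nat by lia.
    apply lcm_step_triple. lia.
  - replace (3 * S k + 9)%nat with (9 + 6 * (3 * q + 2))%nat by lia.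
    apply lcm_step_double. lia.
  - apply lcm_step_generic.
  - lia.
Qed.

Lemma lcm_lucas_pow6_le n : IZR (L n) ^ 6 <= s ^ nsum tau n.
Proof.
  induction n as [|n IH]; [simpl; lra|].
  cbn [nsum]. rewrite pow_add.
  pose proof (root_pow_pos P Q alpha hP hQ hDelta halpha hlargest (tau (S n))).
  apply (Rle_trans _ _ _ (lcm_step_tau n)). apply Rmult_le_compat_r; lra.
Qed.


(* Upper bound: L_n^6 <= s^(Σ tau) with Σ tau <= 2 n^2 + 14 n - 16. *)
Lemma lcm_lucas_upper_bound n : (1 <= n)%nat ->
  IZR (L n) <= Rpower s ((INR n) ^ 2 / 3 + 7 * INR n / 3 - 8 / 3).
Proof.
  intros Hn. apply (Rpower_upper_of_pow _ _ _ 6 (nsum tau n)).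
  - apply Lpos.
  - apply (root_gt1 P Q alpha hP hQ hDelta halpha hlargest).
  - lia.
  - apply lcm_lucas_pow6_le.
  - pose proof (tau_sum_exact n Hn) as Hsum. apply (f_equal INR) in Hsum.
    rewrite !plus_INR, !mult_INR in Hsum. pose proof (pos_INR (tau_defect n)).
    replace (INR 16) with 16 in Hsum by (rewrite INR_IZR_INZ; reflexivity).
    replace (INR 14) with 14 in Hsum by (rewrite INR_IZR_INZ; reflexivity).
    replace (INR 6) with 6 by (rewrite INR_IZR_INZ; reflexivity).
    change (INR 2) with (1 + 1) in Hsum. simpl pow. lra.
Qed.

End UpperBound.

Section SieveCount.
Local Open Scope nat_scope.
Local Open Scope bool_scope.

(* Exponent of the upper estimate |U_j| <= s^(up_exp c j), with c = 0 or 1 as in lucasU_size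
   (and U_1 = 1). *)
Definition up_exp (c j : nat) : nat := if j =? 1 then 0 else j - c.

(* The exponent of M_n = ∏_{q in S, q | n} U_{n/q} when |U_j| <= s^(up j). *)
Definition sieve_term (up : nat -> nat) (n q : nat) : nat :=
  if sieve q && (n mod q =? 0) then up (n / q) else 0.

(* Σ_{q in S, q <= M} F(n/q) with F = nsum up; for M = n it is Σ_{k <= n} (exponent of M_k). *)
Definition sieve_count (up : nat -> nat) (n M : nat) : nat :=
  nsum (fun q => if sieve q then nsum up (n / q) else 0) M.

Lemma nsum_div_succ (f : nat -> nat) n q : 1 <= q ->
  nsum f (S n / q) = nsum f (n / q) + (if S n mod q =? 0 then f (S n / q) else 0).
Proof.
  intros Hq. pose proof (Nat.div_mod_eq n q). pose proof (Nat.mod_upper_bound n q ltac:(lia)).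
  destruct (Nat.eq_dec (S (n mod q)) q) as [Hb|Hb].
  - assert (H1 : S n / q = S (n / q)) by (symmetry; apply (Nat.div_unique _ _ _ 0); lia).
    assert (H2 : S n mod q = 0) by (symmetry; apply (Nat.mod_unique _ _ (S (n / q))); lia).
    rewrite H1, H2. simpl. lia.
  - assert (H1 : S n / q = n / q) by (symmetry; apply (Nat.div_unique _ _ _ (S (n mod q))); lia).
    assert (H2 : S n mod q = S (n mod q)) by (symmetry; apply (Nat.mod_unique _ _ (n / q)); lia).
    rewrite H1, H2. simpl. lia.
Qed.

Lemma sieve_count_interchange up n : nsum (fun k => nsum (sieve_term up k) k) n = sieve_count up n n.
Proof.
  assert (Hsucc : forall n M,
            sieve_count up (S n) M = sieve_count up n M + nsum (sieve_term up (S n)) M).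
  { intros m M. induction M as [|M IH]; [reflexivity|].
    unfold sieve_count in *. cbn [nsum]. rewrite IH. unfold sieve_term.
    destruct (sieve (S M)); cbn [andb]; [rewrite (nsum_div_succ up m (S M)) by lia|]; lia. }
  induction n as [|n IH]; [reflexivity|].
  cbn [nsum]. rewrite IH, Hsucc. unfold sieve_count. cbn [nsum].
  unfold sieve_term. rewrite Nat.Div0.mod_same, Nat.div_same, (Nat.div_small n (S n)) by lia.
  destruct (sieve (S n)); cbn [andb Nat.eqb nsum]; lia.
Qed.

Lemma up_exp_sum_bound c m : c <= 1 ->
  2 * nsum (up_exp c) m <= m * m + (1 - c) * m /\ 16 * nsum (up_exp c) m <= 9 * (m * m).
Proof.
  intros Hc. destruct m as [|m]; [simpl; lia|].
  assert (Hexact : 2 * nsum (up_exp c) (S m) + 2 + 2 * c * S m = S m * S m + S m + 2 * c).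
  { induction m as [|m IH]; [cbn; lia|].
    cbn [nsum] in *. change (up_exp c (S (S m))) with (S (S m) - c). nia. }
  pose proof (Z.square_nonneg (Z.of_nat (S m) - 4)).
  destruct c as [|[|c]]; [split; nia| split; nia| lia].
Qed.

Lemma up_exp_sum_div_bound c n q : c <= 1 -> 1 <= q ->
  2 * (q * q) * nsum (up_exp c) (n / q) <= n * n + (1 - c) * q * n /\
  16 * (q * q) * nsum (up_exp c) (n / q) <= 9 * (n * n).
Proof.
  intros Hc Hq. destruct (up_exp_sum_bound c (n / q) Hc) as [H1 H2].
  pose proof (Nat.Div0.mul_div_le n q). set (m := n / q) in *. set (F := nsum _ m) in *.
  assert (Hsq : q * m * (q * m) <= n * n) by (apply Nat.mul_le_mono; lia).
  assert (Hlin : (1 - c) * q * (q * m) <= (1 - c) * q * n) by (apply Nat.mul_le_mono_l; lia).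
  assert (A1 : q * q * (2 * F) <= q * q * (m * m + (1 - c) * m)) by (apply Nat.mul_le_mono_l; lia).
  assert (A2 : q * q * (16 * F) <= q * q * (9 * (m * m))) by (apply Nat.mul_le_mono_l; lia).
  split; nia.
Qed.

Definition sieve_count_ok (n : nat) : bool :=
  forallb (fun c => 4 * sieve_count (up_exp c) n n + 4 * c * n <=? n * n + 4 + 4 * c) [0; 1].

Lemma sieve_count_small_check : forallb sieve_count_ok (seq 1 80) = true.
Proof. vm_compute. reflexivity. Qed.

End SieveCount.

Lemma nsum_tail_bound (f : nat -> nat) (M0 : nat) (K : R) : (1 <= M0)%nat -> 0 <= K ->
  (forall q, (M0 < q)%nat -> INR (f q) * (INR q * INR q) <= K) ->
  forall M, (M0 <= M)%nat -> INR (nsum f M) <= INR (nsum f M0) + K * (/ INR M0 - / INR M).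
Proof.
  intros HM0 HK Hf M HM. induction HM as [|M HM IH]; [lra|].
  cbn [nsum]. rewrite plus_INR, S_INR.
  assert (HMr : 1 <= INR M) by (apply (le_INR 1); lia).
  pose proof (Hf (S M) ltac:(lia)) as HfM. rewrite S_INR in HfM.
  (* f (M+1) <= K / (M+1)^2 <= K (1/M - 1/(M+1)) *)
  assert (Hstep : INR (f (S M)) <= K * (/ INR M - / (INR M + 1))).
  { replace (/ INR M - / (INR M + 1)) with (/ (INR M * (INR M + 1))) by (field; lra).
    apply (Rmult_le_reg_r (INR M * (INR M + 1))); [nra|].
    rewrite Rmult_assoc, Rinv_l, Rmult_1_r by nra. pose proof (pos_INR (f (S M))). nra. }
  lra.
Qed.

Definition small_sieve : list nat :=
  [2; 3; 5; 7; 11; 13; 17; 19; 23; 25; 29; 31; 35; 37; 41; 43; 47; 49]%nat.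

Lemma nsum_sieve_49 (g : nat -> nat) :
  nsum (fun q => if sieve q then g q else 0%nat) 49
  = fold_right (fun q acc => (g q + acc)%nat) 0%nat small_sieve.
Proof. cbn. lia. Qed.

Lemma fold_sum_le (l : list nat) (g : nat -> nat) (h : nat -> R) :
  (forall q, In q l -> INR (g q) <= h q) ->
  INR (fold_right (fun q acc => (g q + acc)%nat) 0%nat l)
  <= fold_right (fun q acc => h q + acc) 0 l.
Proof.
  induction l as [|q l IH]; intros Hl; [simpl; lra|].
  cbn [fold_right]. rewrite plus_INR. apply Rplus_le_compat; [apply Hl; left; reflexivity|].
  apply IH. intros r Hr. apply Hl. right. exact Hr.
Qed.

Lemma small_sieve_sums (X Y : R) : 0 <= X -> 0 <= Y ->
  fold_right (fun q acc => X / (2 * (INR q * INR q)) + Y / (2 * INR q) + acc) 0 small_sieve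
  <= X * 0.2257 + Y * 0.876.
Proof.
  intros HX HY. unfold small_sieve. cbn [fold_right]. rewrite !INR_IZR_INZ.
  cbn [Z.of_nat Pos.of_succ_nat Pos.succ]. lra.
Qed.

(* For n > 80: the moduli q <= 49 are handled by the first per-modulus estimate and the
   constants above, the moduli q > 49 by the second one and the tail bound. *)
Lemma sieve_count_large c n : (c <= 1)%nat -> (81 <= n)%nat ->
  4 * INR (sieve_count (up_exp c) n n) + 4 * INR c * INR n <= INR n * INR n + 4 + 4 * INR c.
Proof.
  intros Hc Hn. set (X := INR n * INR n). set (Y := INR (1 - c) * INR n).
  set (f := fun q => if sieve q then nsum (up_exp c) (n / q) else 0%nat).
  assert (HnR : 81 <= INR n) by (apply le_INR in Hn; rewrite INR_IZR_INZ in Hn; exact Hn).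
  assert (Htail : INR (nsum f n) <= INR (nsum f 49) + 9 / 16 * X * (/ INR 49 - / INR n)).
  { apply nsum_tail_bound; [lia| unfold X; nra| |lia].
    intros q Hq. unfold f. destruct (sieve q); [|simpl; unfold X; nra].
    destruct (up_exp_sum_div_bound c n q Hc ltac:(lia)) as [_ H].
    apply le_INR in H. rewrite !mult_INR in H. unfold X. simpl in H. lra. }
  assert (Hhead : INR (nsum f 49) <= X * 0.2257 + Y * 0.876).
  { unfold f. rewrite nsum_sieve_49.
    apply (Rle_trans _ (fold_right (fun q acc => X / (2 * (INR q * INR q)) + Y / (2 * INR q) + acc)
                          0 small_sieve)).
    - apply (fold_sum_le _ _ (fun q => X / (2 * (INR q * INR q)) + Y / (2 * INR q))).
      intros q Hq. assert (Hq1 : (1 <= q)%nat).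
      { unfold small_sieve in Hq. repeat (destruct Hq as [<-|Hq]; [lia|]). destruct Hq. }
      assert (HqR : 1 <= INR q) by (apply (le_INR 1), Hq1).
      destruct (up_exp_sum_div_bound c n q Hc Hq1) as [H _].
      apply le_INR in H. rewrite plus_INR, !mult_INR in H. change (INR 2) with (1 + 1) in H.
      apply (Rmult_le_reg_r (2 * (INR q * INR q))); [nra|].
      field_simplify; [|lra]. unfold X, Y. lra.
    - apply small_sieve_sums; unfold X, Y; [nra| apply Rmult_le_pos; apply pos_INR]. }
  assert (HX : 81 * INR n <= X) by (unfold X; apply Rmult_le_compat_r; lra).
  assert (HXn : 0 <= X * / INR n)
    by (apply Rmult_le_pos; [unfold X; nra| apply Rlt_le, Rinv_0_lt_compat; lra]).
  replace (INR 49) with 49 in Htail by (rewrite INR_IZR_INZ; reflexivity).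
  assert (Hc01 : (INR c = 0 /\ INR (1 - c) = 1) \/ (INR c = 1 /\ INR (1 - c) = 0)).
  { destruct c as [|[|c]]; [left| right| lia]; simpl; split; reflexivity. }
  unfold sieve_count. fold f. unfold Y in Hhead.
  destruct Hc01 as [[-> Hc1]|[-> Hc1]]; rewrite Hc1 in Hhead; lra.
Qed.

Lemma sieve_count_bound c n : (c <= 1)%nat -> (1 <= n)%nat ->
  4 * INR (sieve_count (up_exp c) n n) + 4 * INR c * INR n <= INR n * INR n + 4 + 4 * INR c.
Proof.
  intros Hc Hn. destruct (Nat.le_gt_cases n 80) as [Hsmall|Hlarge]; [|apply sieve_count_large; lia].
  pose proof sieve_count_small_check as Hcheck. rewrite forallb_forall in Hcheck.
  specialize (Hcheck n ltac:(apply in_seq; lia)). unfold sieve_count_ok in Hcheck.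
  rewrite forallb_forall in Hcheck. specialize (Hcheck c ltac:(simpl; lia)).
  apply Nat.leb_le, le_INR in Hcheck. rewrite !plus_INR, !mult_INR in Hcheck.
  replace (INR 4) with 4 in Hcheck by (rewrite INR_IZR_INZ; reflexivity). exact Hcheck.
Qed.

Lemma zprod_abs_le (f : nat -> Z) (g : nat -> nat) (s : R) m :
  (forall q, (1 <= q <= m)%nat -> Rabs (IZR (f q)) <= s ^ g q) ->
  Rabs (IZR (zprod f m)) <= s ^ nsum g m.
Proof.
  induction m as [|m IH]; intros Hf; [simpl; rewrite Rabs_R1; lra|].
  cbn [zprod nsum]. rewrite mult_IZR, Rabs_mult, pow_add.
  apply Rmult_le_compat; try apply Rabs_pos; [apply IH; intros; apply Hf; lia| apply Hf; lia].
Qed.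

Lemma low_exp_sum c n : (c <= 1)%nat -> (1 <= n)%nat ->
  (2 * nsum (fun k => k - 1 - c) n + (1 + 2 * c) * n = n * n + 2 * c)%nat.
Proof.
  intros Hc Hn. induction n as [|n IH]; [lia|].
  destruct n as [|n]; [cbn; lia|]. specialize (IH ltac:(lia)). cbn [nsum] in *. nia.
Qed.

Section LowerBound.
Variables (P Q : Z) (alpha : R).
Hypothesis hP : P <> 0%Z.
Hypothesis hQ : Q <> 0%Z.
Hypothesis hcop : Z.gcd P Q = 1%Z.
Hypothesis hDelta : (P * P - 4 * Q > 0)%Z.
Hypothesis halpha : alpha * alpha - IZR P * alpha + IZR Q = 0.
Hypothesis hlargest : Rabs alpha > Rabs (IZR P - alpha).
Notation s := (Rabs alpha).
Notation U := (lucasU P Q).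
Notation L := (lcm_lucas P Q).

Let Unz := lucasU_nonzero P Q alpha hP hQ hDelta halpha hlargest.
Let Lpos n : 0 < IZR (L n) := IZR_lt _ _ (lcm_lucas_pos P Q n Unz).

(* Given exponents with s^(low j) <= |U_j| <= s^(up j), the product M_n is at most s^E_n with
   E_n = Σ_{q in S, q | n} up(n/q), hence L_{k+1} = L_k |U_{k+1}| / gcd(L_k, U_{k+1})
   >= L_k s^(low(k+1) - E_{k+1}). *)
Lemma lcm_step_lower (up low : nat -> nat) k :
  (forall j, (1 <= j)%nat -> s ^ low j <= Rabs (IZR (U j)) <= s ^ up j) ->
  IZR (L k) * s ^ low (S k) <= IZR (L (S k)) * s ^ nsum (sieve_term up (S k)) (S k).
Proof.
  intros Hexp. set (g := Z.gcd (L k) (U (S k))).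
  assert (HM : Rabs (IZR (sieve_product P Q (S k))) <= s ^ nsum (sieve_term up (S k)) (S k)).
  { apply zprod_abs_le. intros q Hq. unfold sieve_factor, sieve_term.
    destruct (sieve q && (S k mod q =? 0)%nat)%bool eqn:E; [|simpl; rewrite Rabs_R1; lra].
    apply Hexp, Nat.div_str_pos. lia. }
  assert (Hg : (g | sieve_product P Q (S k))%Z)
    by (apply gcd_lcm_lucas_divide_sieve; [exact hcop| lia]).
  assert (Hgpos : (0 < g)%Z).
  { pose proof (lcm_lucas_pos P Q k Unz). pose proof (Z.gcd_nonneg (L k) (U (S k))).
    assert (g <> 0%Z) by (intros Hg0; apply Z.gcd_eq_0 in Hg0; lia). lia. }
  assert (HgM : IZR g <= Rabs (IZR (sieve_product P Q (S k)))).
  { rewrite <- abs_IZR. apply IZR_le, Z.divide_pos_le; [|apply Z.divide_abs_r, Hg].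
    assert (sieve_product P Q (S k) <> 0%Z); [|lia].
    apply zprod_nonzero. intros q Hq. unfold sieve_factor.
    destruct (sieve q && (S k mod q =? 0)%nat)%bool eqn:E; [|lia].
    apply Unz, Nat.div_str_pos. lia. }
  assert (Hstep : IZR (L (S k)) * IZR g = IZR (L k) * Rabs (IZR (U (S k)))).
  { rewrite <- abs_IZR, <- !mult_IZR. f_equal. apply lcm_lucas_step. }
  destruct (Hexp (S k) ltac:(lia)) as [Hlow _].
  pose proof (Lpos k). pose proof (Lpos (S k)).
  apply (Rle_trans _ (IZR (L k) * Rabs (IZR (U (S k))))); [apply Rmult_le_compat_l; lra|].
  rewrite <- Hstep. apply Rmult_le_compat_l; lra.
Qed.

Lemma lcm_lucas_lower_product (up low : nat -> nat) n :
  (forall j, (1 <= j)%nat -> s ^ low j <= Rabs (IZR (U j)) <= s ^ up j) ->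
  s ^ nsum low n <= IZR (L n) * s ^ nsum (fun k => nsum (sieve_term up k) k) n.
Proof.
  intros Hexp. induction n as [|n IH]; [simpl; lra|].
  change (nsum low (S n)) with (nsum low n + low (S n))%nat.
  change (nsum (fun k => nsum (sieve_term up k) k) (S n))
    with (nsum (fun k => nsum (sieve_term up k) k) n + nsum (sieve_term up (S n)) (S n))%nat.
  rewrite !pow_add.
  pose proof (lcm_step_lower up low n Hexp) as Hstep.
  set (E := nsum (fun k => nsum (sieve_term up k) k) n) in *.
  set (e := nsum (sieve_term up (S n)) (S n)) in *.
  pose proof (root_pow_pos P Q alpha hP hQ hDelta halpha hlargest (low (S n))).
  pose proof (root_pow_pos P Q alpha hP hQ hDelta halpha hlargest E).
  apply (Rle_trans _ (IZR (L n) * s ^ low (S n) * s ^ E)).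
  - replace (IZR (L n) * s ^ low (S n) * s ^ E) with (IZR (L n) * s ^ E * s ^ low (S n)) by ring.
    apply Rmult_le_compat_r; lra.
  - replace (IZR (L (S n)) * (s ^ E * s ^ e)) with (IZR (L (S n)) * s ^ e * s ^ E) by ring.
    apply Rmult_le_compat_r; lra.
Qed.

(* Lower bound: choose c as in lucasU_size; the exponent is Σ (k - 1 - c) minus the sieve count. *)
Lemma lcm_lucas_lower_bound n : (1 <= n)%nat ->
  Rpower s ((INR n) ^ 2 / 4 - INR n / 2 - 1) <= IZR (L n).
Proof.
  intros Hn. destruct (lucasU_size P Q alpha hP hQ hDelta halpha hlargest) as [c [Hc Hsize]].
  assert (Hexp : forall j, (1 <= j)%nat -> s ^ (j - 1 - c) <= Rabs (IZR (U j)) <= s ^ up_exp c j).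
  { intros j Hj. destruct (Hsize j Hj) as [H1 H2]. split; [exact H1|]. unfold up_exp.
    destruct (Nat.eqb_spec j 1) as [->|_]; [rewrite lucasU_1, Rabs_R1; simpl; lra| exact H2]. }
  apply (Rpower_lower_of_pow _ _ _ _ _ (root_gt1 P Q alpha hP hQ hDelta halpha hlargest)
           (lcm_lucas_lower_product _ _ n Hexp)).
  rewrite sieve_count_interchange.
  pose proof (sieve_count_bound c n Hc Hn) as Hcount.
  pose proof (low_exp_sum c n Hc Hn) as Hlow. apply (f_equal INR) in Hlow.
  rewrite !plus_INR, !mult_INR, plus_INR, mult_INR in Hlow.
  change (INR 2) with (1 + 1) in Hlow. change (INR 1) with 1 in Hlow.
  simpl pow. lra.
Qed.

End LowerBound.

Theorem theorem2 (P Q : Z) (alpha : R)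
  (hP : P <> 0%Z) (hQ : Q <> 0%Z) (hcop : Z.gcd P Q = 1%Z)
  (hDelta : (P * P - 4 * Q > 0)%Z)
  (halpha : alpha * alpha - IZR P * alpha + IZR Q = 0)
  (hlargest : Rabs alpha > Rabs (IZR P - alpha))
  (n : nat) (hn : (1 <= n)%nat) :
  Rpower (Rabs alpha) ((INR n)^2 / 4 - INR n / 2 - 1) <= IZR (lcm_lucas P Q n) /\
  IZR (lcm_lucas P Q n) <= Rpower (Rabs alpha) ((INR n)^2 / 3 + 7 * INR n / 3 - 8 / 3).
Proof.
  split.
  - exact (lcm_lucas_lower_bound P Q alpha hP hQ hcop hDelta halpha hlargest n hn).
  - exact (lcm_lucas_upper_bound P Q alpha hP hQ hcop hDelta halpha hlargest n hn).
Qed.
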